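(* For all $\alpha,\beta\in\mathbb{R}$ and all $f\in C_0^\infty((0,\infty))$ (complex-valued), with $\mathbf C_{\alpha,\beta}=\frac{(\beta-3)(2\alpha-\beta+1)}{4}$, \[ \mathbf C_{\alpha,\beta}^2\left\|\frac{f}{r^2}\right\|_{L^2_\beta}^2\le\left\|\mathfrak L_\alpha f\right\|_{L^2_\beta}^2 . \]
   Context: For $\beta\in\mathbb{R}$, $L^2_\beta$ denotes the weighted space on $(0,\infty)$ with norm $\|g\|_{L^2_\beta}^2=\int_0^\infty |g(r)|^2 r^\beta\,dr$. For $\alpha\in\mathbb{R}$, $\mathfrak L_\alpha$ is the operator $\mathfrak L_\alpha f(r)=f''(r)+\frac{\alpha}{r}f'(r)$. Expressions such as $f/r^2$ denote the function $r\mapsto f(r)/r^2$. *)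

From Stdlib Require Import Reals.
From Coquelicot Require Import Coquelicot.
Open Scope R_scope.

Definition smooth_R (g : R -> R) : Prop :=
  forall (n : nat) (x : R), ex_derive (Derive_n g n) x.

Definition smooth_C (f : R -> C) : Prop :=
  smooth_R (fun r => Re (f r)) /\ smooth_R (fun r => Im (f r)).

(* f in C_0^infty((0,oo)) (extended by 0 to all of R): smooth with support
   contained in a compact interval [a,b] with 0 < a. *)
Definition C0inf_pos (f : R -> C) : Prop :=
  smooth_C f /\
  exists a b : R, 0 < a /\ a <= b /\
    forall r : R, (r < a \/ b < r) -> f r = 0%C.

Definition DerC (f : R -> C) (r : R) : C :=
  (Derive (fun s => Re (f s)) r, Derive (fun s => Im (f s)) r).

Definition Lop (alpha : R) (f : R -> C) (r : R) : C :=
  (DerC (DerC f) r + (alpha / r : C) * DerC f r)%C.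

Definition L2w_sq (beta : R) (g : R -> C) : R :=
  RInt_gen (fun r => (Cmod (g r))^2 * Rpower r beta)
           (at_right 0) (Rbar_locally p_infty).

Definition Cab (alpha beta : R) : R := (beta - 3) * (2 * alpha - beta + 1) / 4.

(* The proof is a one-dimensional "sum of squares plus exact derivative"
   argument.  For a real function u and r > 0 put g = (3 - beta)/2 and
   B = r u' - g u.  Then, pointwise,
     (u'' + alpha/r u')^2 r^beta - C^2 u^2 r^(beta-4)
       = r^(beta-4) (A^2 + ((g-1+alpha)^2 + g^2) B^2) + d/dr Phi(r),
   where A = r^2 u'' + (1 - 2g) r u' + g^2 u and Phi is a quadratic
   form in (u, B) times r^(beta-3) (the "flux").  Integrating over an
   interval [a,b] with 0 < a on whose endpoints u and u' vanish kills the
   flux term and gives the real inequality (rellich_interval).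

   The theorem follows by adding the real inequalities for Re f and
   Im f. *)

From Stdlib Require Import Reals Lra.
From Coquelicot Require Import Coquelicot.
Open Scope R_scope.

Lemma continuous_pow_fun (h : R -> R) (n : nat) (x : R) :
  continuous h x -> continuous (fun y => h y ^ n) x.
Proof.
intros Hh; induction n as [|n IH]; simpl.
- apply continuous_const.
- apply (continuous_mult h (fun y => h y ^ n)); assumption.
Qed.

Lemma continuous_Rpower_pos (c x : R) : 0 < x -> continuous (fun y => Rpower y c) x.
Proof.
intros Hx; apply (ex_derive_continuous (fun y => Rpower y c)).
unfold Rpower; auto_derive; lra.
Qed.

Lemma continuous_div_var (c x : R) : x <> 0 -> continuous (fun y => c / y) x.
Proof. intros Hx; apply (ex_derive_continuous (fun y => c / y)); auto_derive; exact Hx. Qed.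

Lemma Rpower_shift4 (x c : R) : 0 < x -> Rpower x c = Rpower x (c - 4) * x^4.
Proof.
intros Hx; rewrite <- Rpower_pow, <- Rpower_plus by exact Hx.
f_equal; simpl; ring.
Qed.

Ltac solve_continuous := repeat match goal with
 | |- continuous (fun _ => ?c) _ => apply continuous_const
 | |- continuous (fun y => y) _ => apply continuous_id
 | |- continuous (fun y => @?f y + @?g y) _ => apply (continuous_plus f g)
 | |- continuous (fun y => @?f y - @?g y) _ => apply (continuous_minus f g)
 | |- continuous (fun y => @?f y * @?g y) _ => apply (continuous_mult f g)
 | |- continuous (fun y => @?f y ^ ?n) _ => apply (continuous_pow_fun f n)
 | |- _ => solve [auto]
 end.

Section RellichIdentity.
Variables alpha beta : R.

Let g : R := (3 - beta) / 2.
Let bb : R := 2 - beta + alpha.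
Let cc : R := g * (g - 1 + alpha).

(* The flux Phi(x) evaluated at u(x) = u0, u'(x) = u1. *)
Definition rellich_flux (x u0 u1 : R) : R :=
  (bb * (x * u1 - g * u0)^2 + 2 * cc * u0 * (x * u1 - g * u0) + bb * cc * u0^2)
  * Rpower x (beta - 3).

(* Its derivative along u, expressed through u0, u1 and u2 = u''(x). *)
Definition rellich_flux_deriv (x u0 u1 u2 : R) : R :=
  let B := x * u1 - g * u0 in
  let B' := u1 + x * u2 - g * u1 in
  (2 * bb * B * B' + 2 * cc * (u1 * B + u0 * B') + 2 * bb * cc * u0 * u1) * Rpower x (beta - 3)
  + (bb * B^2 + 2 * cc * u0 * B + bb * cc * u0^2) * ((beta - 3) * Rpower x (beta - 4)).

Lemma rellich_flux_is_derive (u : R -> R) (x : R) :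
  0 < x -> ex_derive u x -> ex_derive (Derive u) x ->
  is_derive (fun r => rellich_flux r (u r) (Derive u r)) x
    (rellich_flux_deriv x (u x) (Derive u x) (Derive (Derive u) x)).
Proof.
intros Hx Du DDu; unfold rellich_flux, rellich_flux_deriv, Rpower.
auto_derive.
- repeat split; assumption.
- replace ((beta - 3) * ln x) with ((beta - 4) * ln x + ln x) by ring.
  rewrite exp_plus, exp_ln by exact Hx.
  change (Derive (fun y => u y) x) with (Derive u x).
  change (Derive (fun y => Derive u y) x) with (Derive (Derive u) x).
  field; lra.
Qed.

(* The pointwise inequality: the Rellich density dominates C^2 times the
   Hardy density plus the flux derivative; the gap is the sum of squares
   r^(beta-4) (A^2 + ((g-1+alpha)^2 + g^2) B^2). *)
Lemma rellich_pointwise (x u0 u1 u2 : R) : 0 < x ->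
  (Cab alpha beta)^2 * (u0^2 * Rpower x (beta - 4)) + rellich_flux_deriv x u0 u1 u2
  <= (u2 + alpha / x * u1)^2 * Rpower x beta.
Proof.
intros Hx.
assert (Hbeta3 : Rpower x (beta - 3) = Rpower x (beta - 4) * x).
{ rewrite <- (Rpower_1 x) at 3 by exact Hx. rewrite <- Rpower_plus. f_equal; ring. }
assert (Ht : 0 < Rpower x (beta - 4)) by apply exp_pos.
unfold rellich_flux_deriv; cbv zeta; rewrite (Rpower_shift4 x beta Hx), Hbeta3.
set (t := Rpower x (beta - 4)) in *.
set (A := x^2 * u2 + (1 - 2 * g) * x * u1 + g^2 * u0).
set (B := x * u1 - g * u0).
assert (Hsos : (u2 + alpha / x * u1)^2 * (t * x^4)
   - ((Cab alpha beta)^2 * (u0^2 * t)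
      + ((2 * bb * B * (u1 + x * u2 - g * u1) + 2 * cc * (u1 * B + u0 * (u1 + x * u2 - g * u1))
          + 2 * bb * cc * u0 * u1) * (t * x)
         + (bb * B^2 + 2 * cc * u0 * B + bb * cc * u0^2) * ((beta - 3) * t)))
   = t * (A^2 + ((g - 1 + alpha)^2 + g^2) * B^2)).
{ unfold A, B, Cab, cc, bb, g; field; lra. }
assert (0 <= t * (A^2 + ((g - 1 + alpha)^2 + g^2) * B^2)).
{ apply Rmult_le_pos; [lra|].
  pose proof (pow2_ge_0 A); pose proof (pow2_ge_0 B).
  pose proof (pow2_ge_0 (g - 1 + alpha)); pose proof (pow2_ge_0 g); nra. }
unfold B in *; lra.
Qed.

End RellichIdentity.

Definition hardy_density (beta : R) (u : R -> R) (r : R) : R :=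
  (u r)^2 * Rpower r (beta - 4).

Definition rellich_density (alpha beta : R) (u : R -> R) (r : R) : R :=
  (Derive (Derive u) r + alpha / r * Derive u r)^2 * Rpower r beta.

Definition C2_fun (u : R -> R) : Prop :=
  (forall x, ex_derive u x) /\ (forall x, ex_derive (Derive u) x) /\
  (forall x, continuous (Derive (Derive u)) x).

Lemma smooth_R_C2 (u : R -> R) : smooth_R u -> C2_fun u.
Proof.
intros Hu; split; [|split]; intros x.
- exact (Hu 0%nat x).
- exact (Hu 1%nat x).
- exact (ex_derive_continuous (Derive (Derive u)) x (Hu 2%nat x)).
Qed.

Lemma ex_RInt_continuous_pos (h : R -> R) (a b : R) :
  0 < a -> a <= b -> (forall x, 0 < x -> continuous h x) -> ex_RInt h a b.
Proof.
intros Ha Hab Hh; apply (@ex_RInt_continuous R_CompleteNormedModule); intros x Hx.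
rewrite Rmin_left in Hx by exact Hab; apply Hh; lra.
Qed.

Lemma densities_integrable (alpha beta a b : R) (u : R -> R) :
  0 < a -> a <= b -> C2_fun u ->
  ex_RInt (hardy_density beta u) a b /\ ex_RInt (rellich_density alpha beta u) a b.
Proof.
intros Ha Hab [Du [DDu CDDu]]; split; apply ex_RInt_continuous_pos; auto; intros x Hx.
- pose proof (continuous_Rpower_pos (beta - 4) x Hx).
  pose proof (ex_derive_continuous u x (Du x)).
  unfold hardy_density; solve_continuous.
- pose proof (continuous_Rpower_pos beta x Hx).
  pose proof (continuous_div_var alpha x (Rgt_not_eq _ _ Hx)).
  pose proof (ex_derive_continuous (Derive u) x (DDu x)).
  unfold rellich_density; solve_continuous.
Qed.

(* The real weighted Rellich inequality on an interval [a,b], 0 < a, for u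
   with u = u' = 0 at both endpoints: integrate rellich_pointwise; the flux
   derivative integrates to Phi(b) - Phi(a) = 0. *)
Lemma rellich_interval (alpha beta a b : R) (u : R -> R) :
  0 < a -> a <= b -> C2_fun u ->
  u a = 0 -> Derive u a = 0 -> u b = 0 -> Derive u b = 0 ->
  (Cab alpha beta)^2 * RInt (hardy_density beta u) a b
  <= RInt (rellich_density alpha beta u) a b.
Proof.
intros Ha Hab Hu Hua Hu'a Hub Hu'b.
destruct (densities_integrable alpha beta a b u Ha Hab Hu) as [IK IH].
destruct Hu as [Du [DDu CDDu]].
set (E := fun r => rellich_flux_deriv alpha beta r (u r) (Derive u r) (Derive (Derive u) r)).
assert (HE : is_RInt E a b 0).
{ replace 0 with (minus (rellich_flux alpha beta b (u b) (Derive u b))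
                        (rellich_flux alpha beta a (u a) (Derive u a))).
  2:{ rewrite Hua, Hu'a, Hub, Hu'b; unfold rellich_flux, minus, plus, opp; simpl; ring. }
  apply (is_RInt_derive (fun r => rellich_flux alpha beta r (u r) (Derive u r)) E);
    intros x Hx; rewrite Rmin_left, Rmax_right in Hx by exact Hab; assert (Hx0 : 0 < x) by lra.
  - apply rellich_flux_is_derive; auto.
  - pose proof (continuous_Rpower_pos (beta - 3) x Hx0).
    pose proof (continuous_Rpower_pos (beta - 4) x Hx0).
    pose proof (ex_derive_continuous u x (Du x)).
    pose proof (ex_derive_continuous (Derive u) x (DDu x)).
    unfold E, rellich_flux_deriv; cbv zeta; solve_continuous. }
rewrite <- (Rplus_0_r (_ * RInt _ a b)).
apply (is_RInt_le (fun r => (Cab alpha beta)^2 * hardy_density beta u r + E r)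
                  (rellich_density alpha beta u) a b _ _ Hab).
- exact (is_RInt_plus _ _ a b _ _ (is_RInt_scal _ a b _ _ (RInt_correct _ a b IK)) HE).
- exact (RInt_correct _ a b IH).
- intros x Hx; apply rellich_pointwise; lra.
Qed.

(* A function vanishing outside [a,b] has vanishing derivative there
   (the complement of [a,b] is open). *)
Lemma Derive_vanish_outside (u : R -> R) (a b : R) :
  (forall r, r < a \/ b < r -> u r = 0) ->
  forall r, r < a \/ b < r -> Derive u r = 0.
Proof.
intros Hz r Hr.
rewrite (Derive_ext_loc u (fun _ => 0)) by
  (destruct Hr as [Hr|Hr];
   [apply (filter_imp (fun t => t < a)); [intros t Ht; apply Hz; lra|apply (open_lt a r Hr)]
   |apply (filter_imp (fun t => b < t)); [intros t Ht; apply Hz; lra|apply (open_gt b r Hr)]]).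
apply Derive_const.
Qed.

Lemma densities_vanish_outside (alpha beta a b : R) (u : R -> R) :
  (forall r, r < a \/ b < r -> u r = 0) ->
  forall r, r < a \/ b < r -> hardy_density beta u r = 0 /\ rellich_density alpha beta u r = 0.
Proof.
intros Hz r Hr; unfold hardy_density, rellich_density.
pose proof (Derive_vanish_outside u a b Hz) as Hu1.
rewrite Hz, Hu1, (Derive_vanish_outside (Derive u) a b Hu1) by exact Hr.
split; ring.
Qed.

(* The real inequality for a C^2 function supported in [a,b], 0 < a, stated
   on the larger interval [a/2, b+1] whose endpoints lie outside the support. *)
Lemma rellich_compact_support (alpha beta a b : R) (u : R -> R) :
  0 < a -> a <= b -> C2_fun u -> (forall r, r < a \/ b < r -> u r = 0) ->
  (Cab alpha beta)^2 * RInt (hardy_density beta u) (a / 2) (b + 1)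
  <= RInt (rellich_density alpha beta u) (a / 2) (b + 1).
Proof.
intros Ha Hab Hu Hz.
pose proof (Derive_vanish_outside u a b Hz) as Hz'.
apply rellich_interval; auto; try lra; [apply Hz|apply Hz'|apply Hz|apply Hz']; lra.
Qed.

Lemma RInt_gen_compact_support (h : R -> R) (a b : R) :
  0 < a -> a <= b -> ex_RInt h a b ->
  (forall r, 0 < r < a \/ b < r -> h r = 0) ->
  RInt_gen h (at_right 0) (Rbar_locally p_infty) = RInt h a b.
Proof.
intros Ha Hab Hex Hz.
assert (Hnull : forall c d, 0 < c -> c <= d -> d <= a \/ b <= c -> is_RInt h c d 0).
{ intros c d Hc Hcd Hd.
  apply (is_RInt_ext (fun _ => 0)).
  - intros t Ht; rewrite Rmin_left, Rmax_right in Ht by exact Hcd; symmetry; apply Hz; lra.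
  - pose proof (is_RInt_const c d (0 : R)) as H0.
    unfold scal in H0; simpl in H0; unfold mult in H0; simpl in H0.
    rewrite Rmult_0_r in H0; exact H0. }
apply (@is_RInt_gen_unique R_CompleteNormedModule (at_right 0) (Rbar_locally p_infty) _ _ h).
apply filterlimi_lim_ext_loc with (f := fun _ => RInt h a b); [|apply filterlim_const].
apply Filter_prod with (Q := fun x => 0 < x < a) (R := fun y => b < y).
- exists (mkposreal a Ha); intros y Hy Hy0; simpl in *.
  unfold ball in Hy; simpl in Hy; unfold AbsRing_ball, abs, minus, plus, opp in Hy; simpl in Hy.
  apply Rabs_lt_between' in Hy; lra.
- exists b; intros; lra.
- intros x y Hx Hy; simpl.
  replace (RInt h a b) with (plus (plus 0 (RInt h a b)) 0) by (unfold plus; simpl; ring).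
  apply (is_RInt_Chasles h x b y); [apply (is_RInt_Chasles h x a b)|].
  + apply Hnull; lra.
  + apply (@RInt_correct R_CompleteNormedModule); exact Hex.
  + apply Hnull; lra.
Qed.

Lemma L2w_sq_split (beta a b : R) (g : R -> C) (p q : R -> R) :
  0 < a -> a <= b -> ex_RInt p a b -> ex_RInt q a b ->
  (forall r, 0 < r -> (Cmod (g r))^2 * Rpower r beta = p r + q r) ->
  (forall r, r < a \/ b < r -> p r = 0 /\ q r = 0) ->
  L2w_sq beta g = RInt p a b + RInt q a b.
Proof.
intros Ha Hab Hp Hq Hpq Hout.
assert (Hsum : ex_RInt (fun r => p r + q r) a b) by exact (ex_RInt_plus p q a b Hp Hq).
unfold L2w_sq; rewrite (RInt_gen_compact_support _ a b Ha Hab).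
- transitivity (RInt (fun r => p r + q r) a b).
  + apply RInt_ext; intros x Hx; rewrite Rmin_left in Hx by exact Hab; apply Hpq; lra.
  + exact (@RInt_plus R_CompleteNormedModule p q a b Hp Hq).
- apply (ex_RInt_ext (fun r => p r + q r)); [|exact Hsum].
  intros x Hx; rewrite Rmin_left in Hx by exact Hab; symmetry; apply Hpq; lra.
- intros r Hr; rewrite Hpq by lra; destruct (Hout r) as [-> ->]; [lra|ring].
Qed.

Lemma Cmod_div_sq_weighted (f : R -> C) (beta x : R) : 0 < x ->
  (Cmod (f x / ((x^2)%R : C))%C)^2 * Rpower x beta
  = hardy_density beta (fun s => Re (f s)) x + hardy_density beta (fun s => Im (f s)) x.
Proof.
intros Hx.
assert (Hx2 : ((x^2)%R : C) <> 0%C) by (intros H; apply (f_equal Re) in H; simpl in H; nra).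
unfold hardy_density; rewrite Cmod_div, Cmod_R, Rabs_pos_eq, (Rpower_shift4 x beta Hx) by (auto; apply pow2_ge_0).
unfold Cmod, Rdiv; rewrite Rpow_mult_distr, pow2_sqrt by (apply Rplus_le_le_0_compat; apply pow2_ge_0).
unfold Re, Im; field; lra.
Qed.

Lemma Cmod_Lop_weighted (alpha beta : R) (f : R -> C) (x : R) : x <> 0 ->
  (Cmod (Lop alpha f x))^2 * Rpower x beta
  = rellich_density alpha beta (fun s => Re (f s)) x
    + rellich_density alpha beta (fun s => Im (f s)) x.
Proof.
intros Hx; unfold Lop, DerC, Cmod, rellich_density.
rewrite pow2_sqrt by (apply Rplus_le_le_0_compat; apply pow2_ge_0).
simpl.
change (Derive (fun s => Derive (fun s0 => Re (f s0)) s) x)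
  with (Derive (Derive (fun s => Re (f s))) x).
change (Derive (fun s => Derive (fun s0 => Im (f s0)) s) x)
  with (Derive (Derive (fun s => Im (f s))) x).
field; exact Hx.
Qed.

Theorem theorem1p3 (alpha beta : R) (f : R -> C) :
  C0inf_pos f ->
  (Cab alpha beta)^2 * L2w_sq beta (fun r => (f r / ((r^2)%R : C))%C)
    <= L2w_sq beta (Lop alpha f).
Proof.
intros [[Sre Sim] [a [b [Ha [Hab Hz]]]]].
pose proof (smooth_R_C2 _ Sre) as Cre; pose proof (smooth_R_C2 _ Sim) as Cim.
assert (Zre : forall r, r < a \/ b < r -> Re (f r) = 0) by (intros r Hr; rewrite Hz; auto).
assert (Zim : forall r, r < a \/ b < r -> Im (f r) = 0) by (intros r Hr; rewrite Hz; auto).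
assert (Ha' : 0 < a / 2) by lra; assert (Hab' : a / 2 <= b + 1) by lra.
assert (Wider : forall r, r < a / 2 \/ b + 1 < r -> r < a \/ b < r) by (intros; lra).
pose proof (densities_vanish_outside alpha beta a b _ Zre) as Vre.
pose proof (densities_vanish_outside alpha beta a b _ Zim) as Vim.
destruct (densities_integrable alpha beta _ _ _ Ha' Hab' Cre) as [IKre IHre].
destruct (densities_integrable alpha beta _ _ _ Ha' Hab' Cim) as [IKim IHim].
rewrite (L2w_sq_split beta _ _ _ _ _ Ha' Hab' IKre IKim
           (fun r Hr => Cmod_div_sq_weighted f beta r Hr)
           (fun r Hr => conj (proj1 (Vre r (Wider r Hr))) (proj1 (Vim r (Wider r Hr))))).
rewrite (L2w_sq_split beta _ _ _ _ _ Ha' Hab' IHre IHim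
           (fun r Hr => Cmod_Lop_weighted alpha beta f r (Rgt_not_eq _ _ Hr))
           (fun r Hr => conj (proj2 (Vre r (Wider r Hr))) (proj2 (Vim r (Wider r Hr))))).
rewrite Rmult_plus_distr_l; apply Rplus_le_compat; apply rellich_compact_support; auto.
Qed.
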